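(* Let $\varphi:A^\bullet\to B^\bullet$ and $\psi:B^\bullet\to C^\bullet$ be (continuous) homomorphisms of complexes of Abelian topological groups. (a) If $\varphi$ and $\psi$ are quasi-open, then so is $\psi\varphi$. (b) If $\psi$ is a topological embedding and the zero homomorphism $0^\bullet\to C^\bullet/\psi B^\bullet$ is quasi-open, then $\psi$ is quasi-open; and if in addition $\psi\varphi$ is quasi-open, then $\varphi$ is quasi-open.
   Context: Complexes are $\mathbb Z$-graded complexes of Abelian topological groups with continuous differentials; homomorphisms are continuous chain maps. For a complex $A^\bullet$ with differential $d_A$, $Z^n(A^\bullet)=\ker(d_A|A^n)$ with the subspace topology. A homomorphism $\varphi:A^\bullet\to B^\bullet$ is quasi-open if for every $n$ the homomorphism $\varphi'^n:Z^n(A^\bullet)\oplus B^{n-1}\to Z^n(B^\bullet)$, $(a,b)\mapsto\varphi a-d_Bb$, is open. $C^\bullet/\psi B^\bullet$ carries the quotient topology and induced differential, and $0^\bullet$ denotes the zero complex. *)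

From HB Require Import structures.
From mathcomp Require Import all_boot all_algebra.
From mathcomp Require Import all_classical all_reals topology tvs.


Unset Strict Implicit.
Unset Printing Implicit Defensive.

Import GRing.Theory.
Local Open Scope classical_set_scope.
Local Open Scope ring_scope.

Definition zeroT : Type := unit.
HB.instance Definition _ := Choice.copy zeroT unit.

Definition zadd (_ _ : zeroT) : zeroT := tt.
Definition zopp (_ : zeroT) : zeroT := tt.
Lemma zaddA : associative zadd. Proof. by []. Qed.
Lemma zaddC : commutative zadd. Proof. by []. Qed.
Lemma zadd0 : left_id (tt : zeroT) zadd. Proof. by case. Qed.
Lemma zaddN : left_inverse (tt : zeroT) zopp zadd. Proof. by []. Qed.
HB.instance Definition _ :=
  GRing.isZmodule.Build zeroT zaddA zaddC zadd0 zaddN.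

Definition zopen : set_system zeroT := fun _ => True.
Lemma zopenT : zopen setT. Proof. by []. Qed.
Lemma zopenI : setI_closed zopen. Proof. by []. Qed.
Lemma zopenU (I : Type) (f : I -> set zeroT) :
  (forall i, zopen (f i)) -> zopen (\bigcup_i f i). Proof. by []. Qed.
HB.instance Definition _ := isOpenTopological.Build zeroT zopenT zopenI zopenU.

Lemma to_zeroT_continuous (X : topologicalType) (f : X -> zeroT) : continuous f.
Proof.
apply/continuousP => A _.
have [Att|nAtt] := pselect (A tt).
  suff -> : f @^-1` A = setT by exact: openT.
  by apply/seteqP; split => // x _ /=; case: (f x).
suff -> : f @^-1` A = set0 by exact: open0.
by apply/seteqP; split => // x /=; case: (f x).
Qed.

HB.instance Definition _ :=
  PreTopologicalNmodule_isTopologicalNmodule.Build zeroT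
    (@to_zeroT_continuous _ _).
HB.instance Definition _ :=
  TopologicalNmodule_isTopologicalZmodule.Build zeroT
    (@to_zeroT_continuous _ _).

Record complex := Complex {
  cobj : int -> topologicalZmodType;
  cdiff : forall n : int, cobj n -> cobj (n + 1);
  cdiff_additive : forall n, zmod_morphism (cdiff n);
  cdiff_continuous : forall n, continuous (cdiff n);
  cdiff_cdiff : forall n (x : cobj n), cdiff (n + 1) (cdiff n x) = 0
}.

Definition is_hom (A B : complex) (f : forall n, cobj A n -> cobj B n) :=
  (forall n, zmod_morphism (f n)) /\ (forall n, continuous (f n)) /\
  (forall n (x : cobj A n), cdiff B n (f n x) = f (n + 1) (cdiff A n x)).

Definition cycles (A : complex) (n : int) : set (cobj A n) :=
  [set a | cdiff A n a = 0].

(* phi'^(n+1) : Z^(n+1)(A) (+) B^n -> Z^(n+1)(B), (a, b) |-> phi a - d_B b;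
   the image of a set U, as a subset of the subspace Z^(n+1)(B). *)
Definition qo_image (A B : complex) (f : forall n, cobj A n -> cobj B n)
  (n : int) (U : set (set_type (cycles A (n + 1)) * cobj B n)) :
  set (set_type (cycles B (n + 1))) :=
  [set z | exists2 p, U p &
     set_val z = f (n + 1) (set_val p.1) - cdiff B n p.2].

(* Quasi-openness (stated at every degree n+1, n : int, i.e. at every degree). *)
Definition quasi_open (A B : complex) (f : forall n, cobj A n -> cobj B n) :=
  forall (n : int) (U : set (set_type (cycles A (n + 1)) * cobj B n)),
    open U -> open (qo_image A B f n U).

Definition zdiff (n : int) (_ : zeroT) : zeroT := tt.
Lemma zdiff_additive n : zmod_morphism (zdiff n). Proof. by []. Qed.
Lemma zdiff_continuous n : continuous (zdiff n).
Proof. exact: to_zeroT_continuous. Qed.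
Lemma zdiff_zdiff n (x : zeroT) : zdiff (n + 1) (zdiff n x) = 0.
Proof. by []. Qed.
Definition zero_complex : complex :=
  Complex (fun _ => zeroT) zdiff zdiff_additive zdiff_continuous zdiff_zdiff.

Definition zero_hom (C : complex) : forall n, cobj zero_complex n -> cobj C n :=
  fun n _ => 0.

Definition top_embedding (X Y : topologicalType) (f : X -> Y) :=
  injective f /\ continuous f /\
  forall U : set X, open U -> exists2 V : set Y, open V & f @` U = V `&` range f.

(* [q : C -> Q] presents Q as the quotient complex C / psi B: each q n is a
   surjective homomorphism with kernel psi(B^n), Q^n carries the quotient
   topology, and (q being a chain map) the differential of Q is the induced
   one.  This determines C/psi B up to isomorphism of complexes. *)
Definition is_quotient_complex (B C Q : complex)
  (psi : forall n, cobj B n -> cobj C n) (q : forall n, cobj C n -> cobj Q n) :=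
  is_hom C Q q /\
  (forall n (y : cobj Q n), exists c, q n c = y) /\
  (forall n (c : cobj C n), q n c = 0 <-> exists b, psi n b = c) /\
  (forall n (V : set (cobj Q n)), open V <-> open (q n @^-1` V)).

From HB Require Import structures.
From mathcomp Require Import all_boot all_algebra.
From mathcomp Require Import all_classical all_reals topology tvs.
Import GRing.Theory.
Local Open Scope classical_set_scope.
Local Open Scope ring_scope.

(* The map phi' of a homomorphism phi is viewed as an honest map
   Z^(n+1)(A) x B^n -> Z^(n+1)(B), so that quasi-openness is openness of these
   maps.  For (a), since psi phi a - d(psi b + c) = psi (phi a - d b) - d c,
   the map (psi phi)' composed with the continuous surjection
   ((a, b), c) |-> (a, psi b + c) is psi' o (phi' x id), a composite of open maps.
   For (b), quasi-openness of 0 -> Q = C/psi B says that the differentials of Q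
   are relatively open onto the cycles of Q.  As the quotient map q is open,
   every x close to psi b0 - d c0 whose image in Q is a cycle can be written
   psi b - d c with c close to c0 and, psi being an embedding, b close to b0.
   Both claims of (b) follow from this, injectivity of
   psi transporting the resulting identities back to B. *)

Section ZmodMorphism.
Context {U V : zmodType} {f : U -> V} (fB : zmod_morphism f).

Lemma zmod_morphism0 : f 0 = 0.
Proof. by rewrite -[0]subr0 fB subrr. Qed.

Lemma zmod_morphismD x y : f (x + y) = f x + f y.
Proof. by rewrite -[y in LHS]opprK -[- y]add0r !fB zmod_morphism0 sub0r opprK. Qed.

End ZmodMorphism.

Definition open_map {X Y : topologicalType} (f : X -> Y) :=
  forall U, open U -> open (f @` U).

Lemma openX {X Y : topologicalType} {P : set X} {Q : set Y} :
  open P -> open Q -> open (P `*` Q).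
Proof.
move=> oP oQ; rewrite openE => -[x y] [/= Px Qy].
by exists (P, Q) => //; split; exact: open_nbhs_nbhs.
Qed.

Lemma open_map_id (X : topologicalType) : open_map (@id X).
Proof. by move=> U; rewrite image_id. Qed.

Lemma open_map_comp {X Y Z : topologicalType} (f : X -> Y) (g : Y -> Z) :
  open_map f -> open_map g -> open_map (g \o f).
Proof. by move=> fo go U /fo /go; rewrite image_comp. Qed.

Lemma open_map_pair {X1 X2 Y1 Y2 : topologicalType} (f : X1 -> Y1) (g : X2 -> Y2) :
  open_map f -> open_map g -> open_map (fun p => (f p.1, g p.2)).
Proof.
move=> fo go U oU; rewrite openE => _ [[x1 x2] Ux <-] /=.
have [[P1 P2] [/= + +] PU] : nbhs (x1, x2) U by exact: open_nbhs_nbhs.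
rewrite !nbhsE => -[O1 [oO1 O1x] O1P] [O2 [oO2 O2x] O2P].
apply: (@filterS _ _ _ (f @` O1 `*` g @` O2)).
  move=> [z1 z2] [/= [y1 O1y1 <-] [y2 O2y2 <-]]; exists (y1, y2) => //.
  by apply: PU; split; [exact: O1P | exact: O2P].
by apply: open_nbhs_nbhs; split;
  [exact: openX (fo _ oO1) (go _ oO2) | split; [exists x1 | exists x2]].
Qed.

Lemma continuous_pair {X Y Z : topologicalType} (f : X -> Y) (g : X -> Z) :
  continuous f -> continuous g -> continuous (fun x => (f x, g x)).
Proof.
by move=> fc gc x; apply: (@cvg_pair _ _ _ _ (nbhs (f x)) (nbhs (g x)));
  [exact: fc | exact: gc].
Qed.

Lemma continuous_fst {X Y : topologicalType} : continuous (@fst X Y).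
Proof. by move=> [x y]; exact: cvg_fst. Qed.

Lemma continuous_snd {X Y : topologicalType} : continuous (@snd X Y).
Proof. by move=> [x y]; exact: cvg_snd. Qed.

Lemma continuous_subr {M : topologicalZmodType} (k : M) : continuous (fun x : M => x - k).
Proof.
move=> x; apply: (@continuous_comp _ _ _ (fun x : M => (x, k)) (fun p : M * M => p.1 - p.2)).
  by apply: continuous_pair => y; [exact: cvg_id | exact: cvg_cst].
exact: sub_continuous.
Qed.

Lemma nbhs_set_valP {X : topologicalType} {A : set X} (x : set_type A) (S : set (set_type A)) :
  nbhs x S <-> exists2 N, nbhs (set_val x) N & set_val @^-1` N `<=` S.
Proof.
split=> [|[N xN NS]]; last exact: filterS NS (initial_continuous xN).
rewrite nbhsE => -[_ [[V oV <-] Vx] VS].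
by exists V => //; exists V.
Qed.

Lemma open_map_of_comp_surjective {X Y Z : topologicalType} (g : X -> Y) (h : Y -> Z) :
  continuous g -> (forall y, exists x, g x = y) -> open_map (h \o g) -> open_map h.
Proof.
move=> gc gs hgo U oU.
have -> : h @` U = (h \o g) @` (g @^-1` U).
  apply/seteqP; split=> _ [y Uy <-]; last by exists (g y).
  by have [x gx] := gs y; exists x; rewrite /= gx.
by apply: hgo; move/continuousP: gc; apply.
Qed.

Lemma hom_cycles {A B : complex} {f : forall n, cobj A n -> cobj B n} {n x} :
  is_hom A B f -> cycles A n x -> cycles B n (f n x).
Proof. by move=> [fB [_ fd]]; rewrite /cycles /= fd => ->; rewrite zmod_morphism0. Qed.

Lemma is_hom_comp {A B C : complex} {phi psi} :
  is_hom A B phi -> is_hom B C psi -> is_hom A C (fun n => psi n \o phi n).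
Proof.
move=> [phiB [phic phid]] [psiB [psic psid]]; split; [|split].
- by move=> n x y /=; rewrite phiB psiB.
- by move=> n x; apply: continuous_comp; [exact: phic | exact: psic].
- by move=> n x /=; rewrite psid phid.
Qed.

Section QuasiOpenMap.
Context {A B : complex} {f : forall n, cobj A n -> cobj B n} (hf : is_hom A B f).

Lemma qo_map_subproof n (p : set_type (cycles A (n + 1)) * cobj B n) :
  f (n + 1) (set_val p.1) - cdiff B n p.2 \in cycles B (n + 1).
Proof.
apply/mem_set; rewrite /cycles /= cdiff_additive cdiff_cdiff subr0.
exact: hom_cycles hf (set_valP p.1).
Qed.

Definition cycles_map n (z : set_type (cycles A n)) : set_type (cycles B n) :=
  exist (fun x => x \in cycles B n) _ (mem_set (hom_cycles hf (set_valP z))).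

Definition qo_map n (p : set_type (cycles A (n + 1)) * cobj B n) :
  set_type (cycles B (n + 1)) := exist (fun x => x \in cycles B (n + 1)) _ (qo_map_subproof n p).

Lemma qo_imageE n U : qo_image A B f n U = qo_map n @` U.
Proof.
apply/seteqP; split=> [z [p Up e]|_ [p Up <-]]; last by exists p.
by exists p => //; apply: val_inj.
Qed.

Lemma quasi_openE : quasi_open A B f <-> forall n, open_map (qo_map n).
Proof. by split=> qo n U oU; [rewrite -qo_imageE | rewrite qo_imageE]; exact: qo. Qed.

End QuasiOpenMap.

Lemma quasi_open_comp (A B C : complex) phi psi :
  is_hom A B phi -> is_hom B C psi ->
  quasi_open A B phi -> quasi_open B C psi -> quasi_open A C (fun n => psi n \o phi n).
Proof.
move=> hphi hpsi; have hpsiphi := is_hom_comp hphi hpsi.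
have [psiB [psic psid]] := hpsi.
rewrite (quasi_openE hphi) (quasi_openE hpsi) (quasi_openE hpsiphi) => qphi qpsi n.
pose g (p : set_type (cycles A (n + 1)) * cobj B n * cobj C n) :=
  (p.1.1, psi n p.1.2 + p.2).
have factor_g : qo_map hpsiphi n \o g =
    qo_map hpsi n \o (fun p => (qo_map hphi n p.1, p.2)).
  apply/funext => -[[a b] c]; apply: val_inj => /=.
  by rewrite /= psiB -psid (zmod_morphismD (cdiff_additive C n)) opprD addrA.
have g_continuous : continuous g.
  apply: continuous_pair => p.
    exact: continuous_comp (continuous_fst p) (continuous_fst _).
  apply: (@continuous_comp _ _ _ (fun p => (psi n p.1.2, p.2)) (fun q => q.1 + q.2)).
    apply: continuous_pair => {}p; last exact: continuous_snd.
    exact: continuous_comp (continuous_comp (continuous_fst p) (continuous_snd _)) (psic n _).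
  exact: add_continuous.
apply: (open_map_of_comp_surjective _ _ g_continuous).
  by move=> [a c]; exists ((a, 0), c); rewrite /g /= zmod_morphism0 ?add0r.
rewrite factor_g; apply: open_map_comp (qpsi n).
exact: open_map_pair (qphi n) (@open_map_id _).
Qed.

Lemma quasi_open_zero_cdiff {Q : complex} {n} {V : set (cobj Q n)} :
  quasi_open zero_complex Q (zero_hom Q) -> open V ->
  exists2 D : set (cobj Q (n + 1)), open D &
    forall y, cycles Q (n + 1) y -> D y <-> exists2 v, V v & y = - cdiff Q n v.
Proof.
move=> q0 oV; have [D oD eD] := q0 n _ (openX (@openT _) oV).
exists D => // y yZ.
have -> : D y = qo_image zero_complex Q (zero_hom Q) n (setT `*` V) (exist _ y (mem_set yZ)).
  by rewrite -eD.
rewrite /qo_image /zero_hom set_valE /=; split=> [[[t v] [_ Vv] ->]|[v Vv yE]].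
  by exists v; rewrite // sub0r.
by exists (exist _ (tt : zeroT) (mem_set (erefl tt)), v); rewrite // sub0r.
Qed.

Section QuotientByEmbedding.
Context {B C Q : complex} {psi : forall n, cobj B n -> cobj C n}
  {q : forall n, cobj C n -> cobj Q n}.
Hypothesis hq : is_quotient_complex B C Q psi q.

Lemma quotient_psi n b : q n (psi n b) = 0.
Proof. by have [_ [_ [qK _]]] := hq; apply/qK; exists b. Qed.

Lemma quotient_cycles {n x b} :
  cdiff C (n + 1) x = psi (n + 1 + 1) b -> cycles Q (n + 1) (q (n + 1) x).
Proof.
have [[_ [_ qd]] _] := hq.
by rewrite /cycles /= qd => ->; exact: quotient_psi.
Qed.

Lemma quotient_open_map n : open_map (q n).
Proof.
have [[qB _] [_ [qK qT]]] := hq; move=> V oV; apply/qT.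
have -> : q n @^-1` (q n @` V) = \bigcup_b ((fun c => c - psi n b) @^-1` V).
  apply/seteqP; split=> [c [v Vv qv]|c [b _ /= Vc]].
    have /qK[b psib] : q n (c - v) = 0 by rewrite qB qv subrr.
    by exists b => //=; rewrite psib opprB addrC subrK.
  by exists (c - psi n b); rewrite // qB quotient_psi subr0.
apply: bigcup_open => b _.
by move/continuousP: (continuous_subr (psi n b)); apply.
Qed.

Hypotheses (hpsi : is_hom B C psi) (psi_emb : forall n, top_embedding _ _ (psi n))
  (q0 : quasi_open zero_complex Q (zero_hom Q)).

Lemma near_psi_sub_cdiff {n} {b0 : cobj B (n + 1)} {c0 : cobj C n} {W V} :
  nbhs b0 W -> nbhs c0 V ->
  \forall x \near psi (n + 1) b0 - cdiff C n c0, cycles Q (n + 1) (q (n + 1) x) ->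
    exists b c, [/\ W b, V c & x = psi (n + 1) b - cdiff C n c].
Proof.
move=> Wb0 Vc0; have [[qB [qc qd]] [_ [qK _]]] := hq.
have [psi_inj [_ psi_open]] := psi_emb (n + 1).
have [O oO psiW] := psi_open _ (open_interior W).
set x0 := psi (n + 1) b0 - cdiff C n c0.
have Ox0dc0 : O (x0 + cdiff C n c0).
  have : (psi (n + 1) @` W°) (psi (n + 1) b0) by exists b0.
  by rewrite psiW subrK => -[].
have [[N M] [/= Nx0 Mdc0] NMO] :=
  add_continuous (x0, cdiff C n c0) _ (open_nbhs_nbhs (conj oO Ox0dc0)).
set V' := V `&` cdiff C n @^-1` M.
have V'c0 : V'° c0 by apply: filterI Vc0 _; exact: cdiff_continuous.
have [D oD eD] := quasi_open_zero_cdiff q0 (quotient_open_map _ _ (open_interior V')).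
have x0Z : cycles Q (n + 1) (q (n + 1) x0).
  apply: (quotient_cycles (b := cdiff B (n + 1) b0)).
  by have [_ [_ psid]] := hpsi; rewrite /x0 cdiff_additive cdiff_cdiff subr0 psid.
have : nbhs x0 (N `&` q (n + 1) @^-1` D).
  apply: filterI Nx0 _; apply: qc; apply: open_nbhs_nbhs; split => //.
  apply/eD => //; exists (q n c0); first by exists c0.
  by rewrite qd /x0 qB quotient_psi sub0r.
apply: filterS => x [Nx /eD Dqx] /Dqx[_ [c V'c <-] qxE].
have [Vc Mdc] := interior_subset V'c.
have /qK[b psib] : q (n + 1) (x + cdiff C n c) = 0.
  by rewrite (zmod_morphismD (qB _)) qxE -qd addNr.
have [b' Wb' /psi_inj b'b] : (psi (n + 1) @` W°) (psi (n + 1) b).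
  by rewrite psiW; split; [rewrite psib; exact: (NMO (x, _) (conj Nx Mdc)) | exists b].
by exists b, c; split; [apply: interior_subset; rewrite -b'b | | rewrite psib addrK].
Qed.

Lemma cycles_of_psi_sub_cdiff {n b} c :
  cycles C (n + 1) (psi (n + 1) b - cdiff C n c) -> cycles B (n + 1) b.
Proof.
have [psiB [_ psid]] := hpsi; have [psi_inj _] := psi_emb (n + 1 + 1).
rewrite /cycles /= cdiff_additive cdiff_cdiff subr0 psid => psidb.
by apply: psi_inj; rewrite psidb zmod_morphism0.
Qed.

Lemma quasi_open_of_embedding : quasi_open B C psi.
Proof.
move=> n U oU; rewrite openE => z [[b0 c0] Ub0c0 /= zE].
have [[W V] [/= /nbhs_set_valP[W' W'b0 W'W] Vc0] WVU] : nbhs (b0, c0) U.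
  exact: open_nbhs_nbhs.
have zN := near_psi_sub_cdiff W'b0 Vc0; rewrite -zE in zN.
apply/nbhs_set_valP; econstructor; first exact: zN.
move=> z' /= /(_ (hom_cycles (proj1 hq) (set_valP z'))) [b [c [W'b Vc z'E]]].
have bZ : cycles B (n + 1) b.
  by apply: (cycles_of_psi_sub_cdiff c); rewrite -z'E; exact: set_valP.
exists (exist _ b (mem_set bZ), c) => //.
by apply: WVU; split => //; apply: W'W.
Qed.

Lemma quasi_open_of_comp_embedding {A : complex} {phi} : is_hom A B phi ->
  quasi_open A C (fun n => psi n \o phi n) -> quasi_open A B phi.
Proof.
(* The lifting lemma is used one degree down, so write the degree as n + 1. *)
move=> hphi qc p; rewrite -(subrK 1 p); move: (p - 1) => n U oU.
have [psiB [psic psid]] := hpsi; have [psi_inj _] := psi_emb (n + 1 + 1).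
rewrite openE => w [[a0 b0] Ua0b0 wE].
have [[W V] [/= Wa0 Vb0] WVU] : nbhs (a0, b0) U by exact: open_nbhs_nbhs.
have Pb0 := near_psi_sub_cdiff Vb0 (@filterT _ _ (nbhs_filter (0 : cobj C n))).
rewrite (zmod_morphism0 (cdiff_additive C n)) subr0 /prop_near1 /= in Pb0.
set P := (X in nbhs _ X) in Pb0.
have [I oI IE] := qc (n + 1) _ (openX (open_interior W) (open_interior P)).
apply/nbhs_set_valP; exists (psi (n + 1 + 1) @^-1` I).
  apply: psic; apply: open_nbhs_nbhs; split => //.
  have : qo_image A C (fun n => psi n \o phi n) (n + 1) (W° `*` P°)
      (cycles_map hpsi _ w).
    by exists (a0, psi (n + 1) b0); rewrite //= set_valE /= -set_valE wE psiB psid.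
  by rewrite -IE.
move=> w' /= Iw'.
have : qo_image A C (fun n => psi n \o phi n) (n + 1) (W° `*` P°)
    (cycles_map hpsi _ w') by rewrite -IE.
case=> -[a c] [/= Wa Pc]; rewrite set_valE /= => w'E.
have dcE : cdiff C (n + 1) c = psi (n + 1 + 1) (phi _ (set_val a) - set_val w').
  by rewrite psiB w'E opprB addrCA subrr addr0.
have [b [e [Vb _ cE]]] := interior_subset Pc (quotient_cycles dcE).
exists (a, b); first by apply: WVU; split => //; exact: interior_subset.
by apply: psi_inj; rewrite w'E psiB -psid cE cdiff_additive cdiff_cdiff subr0.
Qed.

End QuotientByEmbedding.

Theorem proposition2p3 (A B C : complex)
  (phi : forall n, cobj A n -> cobj B n) (psi : forall n, cobj B n -> cobj C n) :
  is_hom A B phi -> is_hom B C psi ->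
  (* (a) *)
  (quasi_open A B phi -> quasi_open B C psi ->
     quasi_open A C (fun n => psi n \o phi n)) /\
  (* (b) *)
  (forall (Q : complex) (q : forall n, cobj C n -> cobj Q n),
     is_quotient_complex B C Q psi q ->
     (forall n, top_embedding _ _ (psi n)) ->
     quasi_open zero_complex Q (zero_hom Q) ->
     quasi_open B C psi /\
     (quasi_open A C (fun n => psi n \o phi n) -> quasi_open A B phi)).
Proof.
move=> hphi hpsi; split; first exact: quasi_open_comp.
move=> Q q hq psi_emb q0; split.
  exact: (quasi_open_of_embedding hq hpsi psi_emb q0).
exact: (quasi_open_of_comp_embedding hq hpsi psi_emb q0 hphi).
Qed.
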